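(* Let $U$ be a finite nonempty set, $R$ an equivalence relation on $U$, and $M(R)$ the support matroid induced by $R$. For every $X\subseteq U$, $X$ is a closed set of $M(R)$ if and only if $R_{*}(X)=X$.
   Context: For $x\in U$, $RN(x)=\{y\in U\mid xRy\}$; $R_{*}(X)=\{x\in U\mid RN(x)\subseteq X\}$ and $R^{*}(X)=\{x\in U\mid RN(x)\cap X\neq\emptyset\}$. Let $\mathbf{S}(R)=\{X\subseteq U\mid R^{*}(X)=U\}$. The support matroid $M(R)=(U,\mathbf{I}(R))$ is the matroid on $U$ whose independent sets $\mathbf{I}(R)$ are the subsets of inclusion-minimal members of $\mathbf{S}(R)$. For a matroid $(U,\mathbf{I})$, the rank is $r(X)=\max\{|I|\mid I\subseteq X, I\in\mathbf{I}\}$, the closure is $cl(X)=\{e\in U\mid r(X)=r(X\cup\{e\})\}$, and $X$ is closed if $cl(X)=X$. *)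

From mathcomp Require Import all_boot.
Set Implicit Arguments. Unset Strict Implicit. Unset Printing Implicit Defensive.

Section Support.
Variables (U : finType) (R : rel U).

Definition RN (x : U) : {set U} := [set y | R x y].
Definition lower_approx (X : {set U}) : {set U} := [set x | RN x \subset X].
Definition upper_approx (X : {set U}) : {set U} := [set x | RN x :&: X != set0].
Definition supportS : {set {set U}} := [set X : {set U} | upper_approx X == setT].
Definition indepR (I : {set U}) : bool :=
  [exists X : {set U}, minset (fun Y : {set U} => Y \in supportS) X && (I \subset X)].
Definition rankR (X : {set U}) : nat :=
  \max_(I : {set U} | indepR I && (I \subset X)) #|I|.
Definition clR (X : {set U}) : {set U} := [set e | rankR X == rankR (e |: X)].
Definition closedR (X : {set U}) : Prop := clR X = X.
End Support.

From mathcomp Require Import all_boot.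
Set Implicit Arguments. Unset Strict Implicit. Unset Printing Implicit Defensive.

(* For an equivalence R the independent sets of M(R) are the sets meeting each
   class at most once, so the rank of X is the number of classes it meets and
   cl(X) = R^*(X) is the union of those classes. Hence X is closed iff it is a
   union of classes, which for an equivalence is also equivalent to R_*(X) = X. *)

Section SupportMatroid.
Variables (U : finType) (R : rel U).

Definition rel_free (I : {set U}) : bool :=
  [forall x in I, forall y in I, R x y ==> (x == y)].

Lemma rel_freeP (I : {set U}) :
  reflect {in I &, forall x y, R x y -> x = y} (rel_free I).
Proof.
apply: (iffP forall_inP) => [H x y xI yI Rxy | H x xI].
  by have /forall_inP/(_ y yI)/implyP/(_ Rxy)/eqP := H x xI.
by apply/forall_inP => y yI; apply/implyP => Rxy; apply/eqP; apply: H.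
Qed.

Lemma in_upper_approx (X : {set U}) z :
  (z \in upper_approx R X) = [exists x in X, R z x].
Proof.
rewrite inE; apply/set0Pn/exists_inP => [[x] | [x xX Rzx]].
  by rewrite !inE => /andP[Rzx xX]; exists x.
by exists x; rewrite !inE Rzx.
Qed.

Lemma in_supportS (X : {set U}) :
  (X \in supportS R) = [forall z, [exists x in X, R z x]].
Proof.
rewrite inE; apply/eqP/forallP => [upT z | cover].
  by rewrite -in_upper_approx upT inE.
by apply/setP => z; rewrite in_upper_approx cover inE.
Qed.

Lemma rel_free_supportS_minset (X : {set U}) :
  rel_free X -> X \in supportS R ->
  minset (fun Y : {set U} => Y \in supportS R) X.
Proof.
move=> /rel_freeP freeX SX; apply/minsetP; split=> // Y SY YX.
apply/eqP; rewrite eqEsubset YX /=; apply/subsetP => t tX.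
move: SY; rewrite in_supportS => /forallP/(_ t)/exists_inP[y yY Rty].
by rewrite (freeX t y tX (subsetP YX y yY) Rty).
Qed.

Lemma rel_free_maxset_exists (A C : {set U}) : rel_free C -> C \subset A ->
  {I : {set U} | maxset (fun J : {set U} => rel_free J && (J \subset A)) I
               & C \subset I}.
Proof.
move=> freeC CA.
by apply: (@maxset_exists _ (fun J => rel_free J && (J \subset A))); rewrite freeC.
Qed.

Hypotheses (Rrefl : reflexive R) (Rsym : symmetric R) (Rtrans : transitive R).

Lemma RN_eq x y : (RN R x == RN R y) = R x y.
Proof.
apply/eqP/idP => [E | Rxy].
  have : y \in RN R y by rewrite inE Rrefl.
  by rewrite -E inE.
apply/setP => z; rewrite !inE; apply/idP/idP => [Ryz | ].
  by apply: Rtrans Ryz; rewrite Rsym.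
exact: Rtrans.
Qed.

Lemma rel_free_RN_inj (I : {set U}) : rel_free I -> {in I &, injective (RN R)}.
Proof. by move=> /rel_freeP freeI x y xI yI /eqP; rewrite RN_eq; apply: freeI. Qed.

Lemma minset_supportS_rel_free (X : {set U}) :
  minset (fun Y : {set U} => Y \in supportS R) X -> rel_free X.
Proof.
move=> /minsetP[SX minX]; apply/rel_freeP => x y xX yX Rxy.
apply/eqP/negPn/negP => neq_xy.
have SXy : X :\ y \in supportS R.
  rewrite in_supportS; apply/forallP => z; move: SX.
  rewrite in_supportS => /forallP/(_ z)/exists_inP[w wX Rzw]; apply/exists_inP.
  have [eq_wy|neq_wy] := eqVneq w y; last by exists w; rewrite // !inE neq_wy.
  exists x; first by rewrite !inE xX andbT.
  by apply: Rtrans Rzw _; rewrite eq_wy Rsym.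
by have /setP/(_ y) := minX _ SXy (subsetDl _ _); rewrite !inE eqxx yX.
Qed.

Lemma maxset_rel_free_cover (A I : {set U}) :
  maxset (fun J : {set U} => rel_free J && (J \subset A)) I ->
  {in A, forall z, [exists x in I, R z x]}.
Proof.
move=> /maxsetP[/andP[/rel_freeP freeI IA] maxI] z zA.
have [//|/exists_inP unrelated] := boolP [exists x in I, R z x].
have freezI : rel_free (z |: I) && (z |: I \subset A).
  rewrite subUset sub1set zA IA !andbT; apply/rel_freeP => x y.
  rewrite !inE => /orP[/eqP->|xI] /orP[/eqP->|yI] Rxy //.
  - by case: unrelated; exists y.
  - by case: unrelated; exists x; rewrite // Rsym.
  - exact: freeI.
have /setP/(_ z) := maxI _ freezI (subsetUr _ _); rewrite !inE eqxx => /= zI.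
by case: unrelated; exists z.
Qed.

Lemma indepRE (I : {set U}) : indepR R I = rel_free I.
Proof.
apply/existsP/idP => [[X /andP[/minset_supportS_rel_free /rel_freeP freeX IX]]|].
  by apply/rel_freeP => x y xI yI; apply: freeX; apply: (subsetP IX).
move=> freeI.
have [X maxX IX] := rel_free_maxset_exists freeI (subsetT I).
have [/andP[freeX _] _] := maxsetP maxX.
exists X; rewrite IX andbT; apply: rel_free_supportS_minset => //.
rewrite in_supportS; apply/forallP => z.
exact: maxset_rel_free_cover maxX z (in_setT z).
Qed.

Lemma rankRE (X : {set U}) : rankR R X = #|RN R @: X|.
Proof.
apply/eqP; rewrite eqn_leq; apply/andP; split.
  apply/bigmax_leqP => I /andP[]; rewrite indepRE => freeI IX.
  by rewrite -(card_in_imset (rel_free_RN_inj freeI)) subset_leq_card ?imsetS.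
have free0 : rel_free set0 by apply/rel_freeP => x y; rewrite inE.
have [I maxI _] := rel_free_maxset_exists free0 (sub0set X).
have [/andP[freeI IX] _] := maxsetP maxI.
have -> : RN R @: X = RN R @: I.
  apply/eqP; rewrite eqEsubset (imsetS _ IX) andbT.
  apply/subsetP => _ /imsetP[x xX ->].
  have /exists_inP[i iI Rxi] := maxset_rel_free_cover maxI xX.
  by apply/imsetP; exists i => //; apply/eqP; rewrite RN_eq.
rewrite (card_in_imset (rel_free_RN_inj freeI)).
by apply: leq_bigmax_cond; rewrite indepRE freeI.
Qed.

Lemma clR_upper_approx (X : {set U}) : clR R X = upper_approx R X.
Proof.
apply/setP => e; rewrite in_upper_approx inE !rankRE imsetU1 cardsU1.
have [/imsetP[x xX /eqP]|notin] := boolP (RN R e \in RN R @: X).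
  by rewrite RN_eq eqxx => Rex; symmetry; apply/exists_inP; exists x.
rewrite add1n (ltn_eqF (ltnSn _)); symmetry; apply/negbTE.
apply: contra notin => /exists_inP[x xX Rex]; apply/imsetP; exists x => //.
by apply/eqP; rewrite RN_eq.
Qed.

Lemma upper_approx_idP (X : {set U}) :
  upper_approx R X = X <-> {in X, forall x y, R y x -> y \in X}.
Proof.
split => [upX x xX y Ryx | sat].
  by rewrite -upX in_upper_approx; apply/exists_inP; exists x.
apply/setP => y; rewrite in_upper_approx; apply/exists_inP/idP => [[x xX]|yX].
  exact: sat.
by exists y.
Qed.

Lemma lower_approx_idP (X : {set U}) :
  lower_approx R X = X <-> {in X, forall x y, R x y -> y \in X}.
Proof.
split => [lowX x xX y Rxy | sat].
  by move: xX; rewrite -{1}lowX inE => /subsetP; apply; rewrite inE.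
apply/setP => x; rewrite inE; apply/idP/idP => [/subsetP|xX]; last first.
  by apply/subsetP => y; rewrite inE; apply: sat.
by apply; rewrite inE.
Qed.

End SupportMatroid.

Theorem corollary2 (U : finType) (R : rel U)
  (HU : 0 < #|U|)
  (Hrefl : reflexive R) (Hsym : symmetric R) (Htrans : transitive R) :
  forall X : {set U}, closedR R X <-> lower_approx R X = X.
Proof.
move=> X; rewrite /closedR clR_upper_approx //.
split=> [/(upper_approx_idP Hrefl) sat | /(lower_approx_idP Hrefl) sat].
- by apply/(lower_approx_idP Hrefl) => x xX y Rxy; apply: (sat x); rewrite // Hsym.
- by apply/(upper_approx_idP Hrefl) => x xX y Ryx; apply: (sat x); rewrite // Hsym.
Qed.
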